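(* Let $G=(V,E)$ be a finite simple graph of order $n$ and let $T=n-1$. If $(x,y,z)$ is an optimal solution of the Time Step Model $\mathrm{TSM}(G,T)$ (minimizing $\sum_{v\in V}x^0_v$), then $C=\{v\in V\colon x^0_v=1\}$ is a minimum zero forcing set of $G$.
   Context: Zero forcing: under the standard color change rule a filled vertex $u$ can force a non-filled vertex $v$ if $v$ is the only non-filled neighbor of $u$; $C\subseteq V$ is a zero forcing set if, starting with $C$ filled and repeatedly forcing, all of $V$ becomes filled. A minimum zero forcing set is a zero forcing set of minimum size. $N(u)$ is the neighborhood of $u$ and $d(u)=|N(u)|$. Time Step Model: $A$ is the set of arcs containing $(u,v)$ and $(v,u)$ for each edge $\{u,v\}$, $[T]=\{1,\dots,T\}$. $\mathrm{TSM}(G,T)$ has binary variables $x^t_v$ ($v\in V$, $t\in\{0,\dots,T\}$), $y^t_a$ ($a\in A$, $t\in[T]$), $z^t$ ($t\in[T]$), with constraints: (1) $x^0_v+\sum_{t\in[T]}\sum_{a=(u,v)\in A}y^t_a=1$ for all $v$; (2) $y^t_a\leq x^{t-1}_u$ for all $a=(u,v)\in A$, $t\in[T]$; (3) $y^t_a\leq x^{t-1}_w$ for all $a=(u,v)\in A$, $w\in N(u)\setminus\{v\}$, $t\in[T]$; (4) $x^t_v=x^{t-1}_v+\sum_{a=(u,v)\in A}y^t_a$ for all $v$, $t\in[T]$; (5) $x^{t-1}_u-x^{t-1}_v+\sum_{w\in N(u)\setminus\{v\}}x^{t-1}_w\leq\sum_{a=(w,v)\in A}y^t_a+d(u)-1$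 for all $(u,v)\in A$, $t\in[T]$; (6) $\frac1n\sum_{v\in V}(x^t_v-x^{t-1}_v)-z^t\leq0$ for all $t\in[T]$; (7) $z^t-\sum_{v\in V}(x^t_v-x^{t-1}_v)\leq 0$ for all $t\in[T]$. Objective: minimize $\sum_{v\in V}x^0_v$. *)

From mathcomp Require Import all_boot all_order all_algebra.
Set Implicit Arguments. Unset Strict Implicit. Unset Printing Implicit Defensive.
Import Order.TTheory GRing.Theory Num.Theory.

(* A finite simple graph on vertex set V is given by an adjacency relation
   e : rel V that is symmetric and irreflexive. N(u) = [set w | e u w]. *)

Section ZF.
Variables (V : finType) (e : rel V).

Definition nbhd (u : V) : {set V} := [set w | e u w].
Definition deg (u : V) : nat := #|nbhd u|.

Inductive filled (C : {set V}) : V -> Prop :=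
| filled_init v : v \in C -> filled C v
| filled_force u v : filled C u -> e u v ->
    (forall w, e u w -> w != v -> filled C w) -> filled C v.

Definition zero_forcing_set (C : {set V}) : Prop := forall v, filled C v.

Definition min_zero_forcing_set (C : {set V}) : Prop :=
  zero_forcing_set C /\ forall D : {set V}, zero_forcing_set D -> #|C| <= #|D|.

(* Binary variables:
   x t v   for v in V, t in {0..T};
   y t u v for the arc a = (u,v) in A (i.e. e u v), t in [T];
   z t     for t in [T].
   Values of the functions outside these index ranges are irrelevant. *)
Local Open Scope ring_scope.

Definition b2q (b : bool) : rat := b%:R.

Definition TSM_feasible (Tm : nat) (x : nat -> V -> bool)
    (y : nat -> V -> V -> bool) (z : nat -> bool) : Prop :=
  let n := #|V| in
  (* (1) *)
  (forall v, b2q (x 0%N v) + \sum_(t < Tm) \sum_(u | e u v) b2q (y t.+1 u v) = 1)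
  (* (2) *)
  /\ (forall u v t, e u v -> (1 <= t <= Tm)%N -> b2q (y t u v) <= b2q (x t.-1 u))
  (* (3) *)
  /\ (forall u v w t, e u v -> e u w -> w != v -> (1 <= t <= Tm)%N ->
        b2q (y t u v) <= b2q (x t.-1 w))
  (* (4) *)
  /\ (forall v t, (1 <= t <= Tm)%N ->
        b2q (x t v) = b2q (x t.-1 v) + \sum_(u | e u v) b2q (y t u v))
  (* (5) *)
  /\ (forall u v t, e u v -> (1 <= t <= Tm)%N ->
        b2q (x t.-1 u) - b2q (x t.-1 v)
          + \sum_(w | e u w && (w != v)) b2q (x t.-1 w)
        <= \sum_(w | e w v) b2q (y t w v) + (deg u)%:R - 1)
  (* (6) *)
  /\ (forall t, (1 <= t <= Tm)%N ->
        (n%:R)^-1 * \sum_v (b2q (x t v) - b2q (x t.-1 v)) - b2q (z t) <= 0)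
  (* (7) *)
  /\ (forall t, (1 <= t <= Tm)%N ->
        b2q (z t) - \sum_v (b2q (x t v) - b2q (x t.-1 v)) <= 0).

Definition TSM_objective (x : nat -> V -> bool) : rat := \sum_v b2q (x 0%N v).

Definition TSM_optimal (Tm : nat) x y z : Prop :=
  TSM_feasible Tm x y z /\
  forall x' y' z', TSM_feasible Tm x' y' z' -> TSM_objective x <= TSM_objective x'.

End ZF.

(* A feasible solution of TSM(G, T) describes a forcing process: by (2)-(4),
   a vertex that becomes filled at step t is forced along an arc chosen by y
   from vertices filled at step t - 1, and by (1) every vertex is filled at
   step T.  Hence C = {v | x^0_v = 1} is zero forcing.  Conversely, any zero
   forcing set D yields a feasible solution with x^0 = 1_D: fill in parallel
   every vertex that can be forced, recording one chosen forcer in y.  Until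
   everything is filled each round adds a vertex, so T = n - 1 rounds
   suffice.  Optimality of x then gives |C| <= |D|. *)

From mathcomp Require Import all_boot all_order all_algebra.
From mathcomp Require Import lra.
Set Implicit Arguments. Unset Strict Implicit. Unset Printing Implicit Defensive.
Import Order.TTheory GRing.Theory Num.Theory.

Local Open Scope ring_scope.

Lemma le_b2q (b b' : bool) : (b2q b <= b2q b') = (b ==> b').
Proof. by case: b; case: b'; rewrite /b2q /= ?lexx ?ler01 ?ler10. Qed.

Lemma sum_b2q (I : finType) (P : pred I) (F : pred I) :
  \sum_(i | P i) b2q (F i) = #|[pred i | P i && F i]|%:R.
Proof.
rewrite /b2q -natr_sum -sum1_card; congr _%:R.
rewrite big_mkcond [RHS]big_mkcond /=; apply: eq_bigr => i _.
by rewrite inE; case: (P i); case: (F i).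
Qed.

Lemma sum_b2q_mem (I : finType) (A : {set I}) : \sum_i b2q (i \in A) = #|A|%:R.
Proof. by rewrite sum_b2q; congr _%:R; apply: eq_card. Qed.

Lemma sum_b2q_neq0 (I : finType) (P : pred I) (F : pred I) :
  \sum_(i | P i) b2q (F i) != 0 -> exists2 i, P i & F i.
Proof.
rewrite sum_b2q pnatr_eq0 -lt0n => /card_gt0P [i /andP [Pi Fi]].
by exists i.
Qed.

Section TimeStepModel.
Variables (V : finType) (e : rel V).

Lemma TSM_objective_card (x : nat -> V -> bool) :
  TSM_objective x = #|[set v | x 0%N v]|%:R.
Proof. by rewrite -sum_b2q_mem; apply: eq_bigr => v _; rewrite inE. Qed.

Lemma filled_set0 v : ~ filled e set0 v.
Proof. by elim=> // w; rewrite inE. Qed.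

Section FeasibleSolution.
Variables (Tm : nat) (x : nat -> V -> bool) (y : nat -> V -> V -> bool) (z : nat -> bool).
Hypothesis feasible : TSM_feasible e Tm x y z.

Let C := [set v | x 0%N v].

Lemma filled_of_x t v : (t <= Tm)%N -> x t v -> filled e C v.
Proof.
case: feasible => _ [cons2 [cons3 [cons4 _]]].
elim: t v => [|t IHt] v le_tTm xtv; first by apply: filled_init; rewrite inE.
have {}IHt w : x t w -> filled e C w := IHt w (ltnW le_tTm).
have bounds : (1 <= t.+1 <= Tm)%N := le_tTm.
case xtv0: (x t v); first exact: IHt.
have /sum_b2q_neq0 [u euv ytuv] : \sum_(u | e u v) b2q (y t.+1 u v) != 0.
  by move: (cons4 v t.+1 bounds); rewrite xtv xtv0 /b2q /= add0r => <-; rewrite oner_eq0.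
apply: (filled_force (u := u)) => //.
  by apply: IHt; move: (cons2 u v t.+1 euv bounds); rewrite le_b2q ytuv.
move=> w euw wv; apply: IHt.
by move: (cons3 u v w t.+1 euv euw wv bounds); rewrite le_b2q ytuv.
Qed.

(* Telescoping (4) over time and comparing with (1) gives [x Tm v = 1]. *)
Lemma x_last v : x Tm v.
Proof.
case: feasible => cons1 [_ [_ [cons4 _]]].
suff: b2q (x Tm v) = 1 by rewrite /b2q; case: (x Tm v).
rewrite -(cons1 v) -[b2q (x Tm v)](subrK (b2q (x 0%N v))) addrC.
rewrite -(telescope_sumr (fun t => b2q (x t v)) (leq0n Tm)) big_mkord.
congr (_ + _); apply: eq_bigr => t _.
by rewrite (cons4 v t.+1 (ltn_ord t)) addrC addKr.
Qed.

Lemma TSM_feasible_zero_forcing : zero_forcing_set e C.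
Proof. by move=> v; apply: (filled_of_x (leqnn Tm)); apply: x_last. Qed.

End FeasibleSolution.

Section ChronologicalSolution.
Variable D : {set V}.

Definition forces (S : {set V}) (u v : V) :=
  [&& u \in S, e u v & [forall w, e u w && (w != v) ==> (w \in S)]].

Definition forcer S v := [pick u | forces S u v].

Definition force_step S := S :|: [set v | [exists u, forces S u v]].

Definition filled_at t := iter t force_step D.

Definition chrono_x t v := v \in filled_at t.

Definition chrono_y t u v :=
  [&& (0 < t)%N, v \notin filled_at t.-1 & forcer (filled_at t.-1) v == Some u].

Definition chrono_z t := (#|filled_at t.-1| < #|filled_at t|)%N.

Lemma filled_atS t : filled_at t.+1 = force_step (filled_at t).
Proof. by []. Qed.

Lemma filled_at_subS t : filled_at t \subset filled_at t.+1.
Proof. exact: subsetUl. Qed.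

Lemma filled_at_subP t : filled_at t.-1 \subset filled_at t.
Proof. by case: t => [|t]; [exact: subxx | exact: filled_at_subS]. Qed.

Lemma sub_filled_at t : D \subset filled_at t.
Proof. by elim: t => // t IHt; apply: subset_trans IHt (filled_at_subS t). Qed.

Lemma forcerP S u v : forcer S v = Some u -> forces S u v.
Proof. by rewrite /forcer; case: pickP => // u' fu' [<-]. Qed.

Lemma mem_force_step S v :
  (v \in force_step S) = (v \in S) || [exists u, forces S u v].
Proof. by rewrite !inE. Qed.

Lemma filled_sub_fixpoint S :
  force_step S = S -> D \subset S -> forall v, filled e D v -> v \in S.
Proof.
move=> fixS sDS v; elim=> [w /(subsetP sDS) // | u w _ uS euw _ IHw].
rewrite -fixS mem_force_step; apply/orP; right; apply/existsP; exists u.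
by rewrite /forces uS euw; apply/forallP => w'; apply/implyP => /andP [? ?]; apply: IHw.
Qed.

Hypothesis D_zero_forcing : zero_forcing_set e D.

Lemma filled_at_grow t : filled_at t = setT \/ (t < #|filled_at t|)%N.
Proof.
elim: t => [|t [IHt | IHt]].
- case: (set_0Vmem D) => [D0 | [d dD]]; last by right; apply/card_gt0P; exists d.
  by left; apply/setP => v; have := D_zero_forcing v; rewrite D0 => /filled_set0.
- by left; apply/eqP; rewrite eqEsubset subsetT -IHt filled_at_subS.
- have [fixS | nfixS] := eqVneq (force_step (filled_at t)) (filled_at t).
    left; apply/setP => v; rewrite filled_atS fixS in_setT.
    exact: filled_sub_fixpoint fixS (sub_filled_at t) v (D_zero_forcing v).
  right; rewrite filled_atS; apply: leq_ltn_trans IHt (proper_card _).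
  by rewrite properEneq eq_sym nfixS subsetUl.
Qed.

Lemma filled_at_last : filled_at #|V|.-1 = setT.
Proof.
case: (filled_at_grow #|V|.-1) => // lt_card; apply/eqP.
rewrite eqEcard subsetT cardsT /=; move: lt_card (max_card (mem (filled_at #|V|.-1))).
by case: #|V|.
Qed.

Lemma sum_chrono_y t v : (0 < t)%N ->
  \sum_(u | e u v) b2q (chrono_y t u v) = b2q (chrono_x t v) - b2q (chrono_x t.-1 v).
Proof.
case: t => // t _; rewrite /chrono_x filled_atS mem_force_step /=.
set S := filled_at t.
have [vS | vS] := boolP (v \in S).
  by rewrite subrr big1 // => u _; rewrite /chrono_y vS.
rewrite /chrono_y vS /= [b2q false]/b2q subr0 /forcer.
case: pickP => [u0 fu0 | nofu].
  have -> : [exists u, forces S u v] by apply/existsP; exists u0.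
  rewrite (bigD1 u0) /=; last by case/and3P: fu0.
  rewrite eqxx big1 ?addr0 // => u /andP [_ neq_u].
  by rewrite (inj_eq (@Some_inj _)) eq_sym (negbTE neq_u).
have -> : [exists u, forces S u v] = false by apply/negbTE/existsPn => u; rewrite nofu.
by rewrite big1.
Qed.

Lemma card_unforced_lt (S : {set V}) u v : u \in S -> e u v -> ~~ forces S u v ->
  (#|[pred w | (e u w && (w != v)) && (w \in S)]| < #|[pred w | e u w && (w != v)]|)%N.
Proof.
rewrite /forces => uS euv; rewrite uS euv /= => /forallPn [w].
rewrite negb_imply => /andP [Aw wS]; apply: proper_card; apply/properP; split.
  by apply/subsetP => w'; rewrite !inE => /andP [].
by exists w; rewrite !inE ?Aw // (negbTE wS) andbF.
Qed.

Lemma deg_neighbour u v : e u v -> deg e u = #|[pred w | e u w && (w != v)]|.+1.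
Proof.
move=> euv; rewrite /deg (cardD1 v) inE euv add1n; congr _.+1.
by apply: eq_card => w; rewrite !inE andbC.
Qed.

Lemma chrono_constraint5 u v t : e u v -> (0 < t)%N ->
  b2q (chrono_x t.-1 u) - b2q (chrono_x t.-1 v)
    + \sum_(w | e u w && (w != v)) b2q (chrono_x t.-1 w)
  <= \sum_(w | e w v) b2q (chrono_y t w v) + (deg e u)%:R - 1.
Proof.
move=> euv t_gt0; rewrite sum_chrono_y // (deg_neighbour euv) sum_b2q.
set A := [pred w | e u w && (w != v)].
set B := [pred w | (e u w && (w != v)) && chrono_x t.-1 w].
suff: (chrono_x t.-1 u + #|B| <= chrono_x t v + #|A|)%N.
  by rewrite -(ler_nat rat) !natrD -addn1 natrD /b2q; lra.
have le_BA : (#|B| <= #|A|)%N.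
  by apply: subset_leq_card; apply/subsetP => w; rewrite !inE => /andP [].
have [vS' | vS'] := boolP (chrono_x t v); first by rewrite leq_add ?leq_b1.
case: t t_gt0 => // t _ in A B le_BA vS' *.
rewrite /chrono_x filled_atS mem_force_step negb_or in vS'.
case/andP: vS' => _ /existsPn nof; rewrite /chrono_x /=.
have [uS | uS] := boolP (u \in filled_at t); last by rewrite add0n.
exact: card_unforced_lt uS euv (nof u).
Qed.

Lemma sum_chrono_x_diff t :
  \sum_v (b2q (chrono_x t v) - b2q (chrono_x t.-1 v))
  = (#|filled_at t| - #|filled_at t.-1|)%:R.
Proof.
by rewrite sumrB !sum_b2q_mem natrB // subset_leq_card // filled_at_subP.
Qed.

Lemma chrono_zE t : chrono_z t = (0 < #|filled_at t| - #|filled_at t.-1|)%N.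
Proof. by rewrite subn_gt0. Qed.

Lemma chrono_constraint6 t :
  (#|V|%:R)^-1 * \sum_v (b2q (chrono_x t v) - b2q (chrono_x t.-1 v))
    - b2q (chrono_z t) <= 0.
Proof.
rewrite sum_chrono_x_diff chrono_zE subr_le0.
set d := (_ - _)%N; have [-> | d_gt0] := posnP d; first by rewrite mulr0 lexx.
have le_dV : (d <= #|V|)%N by rewrite (leq_trans (leq_subr _ _)) ?max_card.
rewrite /b2q /= ler_pdivrMl ?mulr1 ?ler_nat // ltr0n.
exact: leq_trans d_gt0 le_dV.
Qed.

Lemma chrono_constraint7 t :
  b2q (chrono_z t) - \sum_v (b2q (chrono_x t v) - b2q (chrono_x t.-1 v)) <= 0.
Proof.
rewrite sum_chrono_x_diff chrono_zE subr_le0 /b2q ler_nat.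
by case: posnP => [-> | ].
Qed.

Lemma chrono_constraint1 v :
  b2q (chrono_x 0 v) + \sum_(t < #|V|.-1) \sum_(u | e u v) b2q (chrono_y t.+1 u v) = 1.
Proof.
under eq_bigr => t _ do rewrite sum_chrono_y //=.
rewrite -(big_mkord xpredT (fun t => b2q (chrono_x t.+1 v) - b2q (chrono_x t v))).
by rewrite telescope_sumr // addrC subrK /chrono_x filled_at_last in_setT.
Qed.

Lemma chrono_feasible : TSM_feasible e #|V|.-1 chrono_x chrono_y chrono_z.
Proof.
split; [exact: chrono_constraint1 | split; [|split; [|split; [|split; [|split]]]]].
- by move=> u v t _ _; rewrite le_b2q; apply/implyP => /and3P [_ _ /eqP /forcerP /and3P []].
- move=> u v w t _ euw wv _; rewrite le_b2q; apply/implyP => /and3P [_ _ /eqP /forcerP].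
  by case/and3P=> _ _ /forallP /(_ w); rewrite euw wv.
- by move=> v t /andP [t_gt0 _]; rewrite sum_chrono_y // addrC subrK.
- by move=> u v t euv /andP [t_gt0 _]; apply: chrono_constraint5.
- by move=> t _; apply: chrono_constraint6.
- by move=> t _; apply: chrono_constraint7.
Qed.

Lemma chrono_x0 : [set v | chrono_x 0 v] = D.
Proof. by apply/setP => v; rewrite inE. Qed.

End ChronologicalSolution.
End TimeStepModel.

Theorem corollary4p4 (V : finType) (e : rel V)
    (e_sym : symmetric e) (e_irr : irreflexive e)
    (x : nat -> V -> bool) (y : nat -> V -> V -> bool) (z : nat -> bool) :
  TSM_optimal e (#|V|.-1) x y z ->
  min_zero_forcing_set e [set v | x 0 v].
Proof.
move=> [feasible optimal]; split; first exact: TSM_feasible_zero_forcing feasible.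
move=> D D_zero_forcing.
have := optimal _ _ _ (chrono_feasible D_zero_forcing).
by rewrite !TSM_objective_card chrono_x0 ler_nat.
Qed.
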